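(* Let $R_1$ and $R_2$ be two bisimulations on the state space $E$ of a Feller-Dynkin process. Then the transitive closure $R$ of $R_1 \cup R_2$ is a bisimulation.
   Context: Let $E$ be a locally compact Hausdorff space with countable base, equipped with its Borel $\sigma$-algebra $\mathcal{E}$, and let $E_\partial = E \uplus \{\partial\}$ be its one-point compactification. A Feller-Dynkin semigroup is a strongly continuous semigroup $(\hat P_t)_{t\ge 0}$ of linear operators on $C_0(E)$ (continuous functions vanishing at infinity, sup norm) such that $0\le f\le 1$ implies $0\le \hat P_t f\le 1$; it determines sub-Markov kernels $P_t$ on $E$ with $\hat P_t f(x)=\int f(y)P_t(x,dy)$. A trajectory is a cadlag map $\omega:[0,\infty)\to E_\partial$ such that if $\omega(t-)=\partial$ or $\omega(t)=\partial$ then $\omega(u)=\partial$ for all $u\ge t$. Let $\Omega$ be the set of trajectories, $X_t(\omega)=\omega(t)$, $\mathcal{G}=\sigma(X_s : s\ge 0)$, and for $x\in E_\partial$ let $\mathbb{P}^x$ be the unique probability measure on $(\Omega,\mathcal{G})$ with $\mathbb{P}^x(X_0\in dx_0, X_{t_1}\in dx_1,\dots,X_{t_n}\in dx_n)=\delta_x(dx_0)P^{+\partial}_{t_1}(x_0,dx_1)\cdots P^{+\partial}_{t_n-t_{n-1}}(x_{n-1},dx_n)$ for all $0\le t_1\le\dots\le t_n$, where $P^{+\partial}_t$ extends $P_t$ to $E_\partial$ by $P^{+\partial}_t(x,\{\partial\})=1-P_t(x,E)$ and $P^{+\partial}_t(\partial,\{\partial\})=1$. The (Feller-Dynkin) process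 is also equipped with $obs:E\to 2^{AP}$ for a finite set $AP$ of atomic propositions, extended by $obs(\partial)=\partial$. An equivalence relation $R$ on $E$ is a bisimulation if whenever $x\,R\,y$: (i) $obs(x)=obs(y)$, and (ii) for every $R$-closed set $B\in\mathcal{G}$, $\mathbb{P}^x(B)=\mathbb{P}^y(B)$. Here $B$ is $R$-closed if for every $\omega\in B$ and every trajectory $\omega'$ with $\omega(t)\,R\,\omega'(t)$ for all $t\ge 0$ (the point $\partial$ being related to itself), we have $\omega'\in B$. *)

From HB Require Import structures.
From mathcomp Require Import all_boot all_order all_algebra.
From mathcomp Require Import all_classical all_reals all_analysis.
From Stdlib Require Import Relations.
Set Implicit Arguments. Unset Strict Implicit. Unset Printing Implicit Defensive.
Import Order.TTheory GRing.Theory Num.Theory.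
Import numFieldNormedType.Exports.
Local Open Scope classical_set_scope.
Local Open Scope ring_scope.

Definition lcch_space (E : topologicalType) : Prop :=
  [/\ hausdorff_space E, locally_compact [set: E] & second_countable (T := E)].

Definition borelType (E : ptopologicalType) := g_sigma_algebraType (@open E).

(* E_partial = E + {partial}, encoded as option E (None = partial).   *)
(* Convergence in the one-point compactification along a filter F:    *)
Definition conv_Ep {E : topologicalType} {T : Type} (F : set_system T)
    (f : T -> option E) (p : option E) : Prop :=
  match p with
  | Some x => forall U, nbhs x U -> F (fun u => exists y, f u = Some y /\ U y)
  | None => forall K : set E, compact K ->
              F (fun u => forall y, f u = Some y -> ~ K y)
  end.

Definition measurable_Ep {E : ptopologicalType} (A : set (option E)) : Prop :=
  @measurable _ (borelType E) [set y | A (Some y)].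

Section Trajectories.
Context {R : realType} {E : ptopologicalType}.

(* A trajectory is a cadlag map [0,oo) -> E_partial absorbed at partial.
   It is represented by a map R -> option E normalised to be constant
   (= value at 0) on negative times, so that trajectories in the sense of
   the paper correspond bijectively to elements of [traj]. *)
Definition is_traj (w : R -> option E) : Prop :=
  [/\ (forall t, t < 0 -> w t = w 0),
      (forall t, 0 <= t -> conv_Ep (at_right t) w (w t)),
      (forall t, 0 < t -> exists l, conv_Ep (at_left t) w l) &
      (forall t, 0 <= t ->
         (w t = None \/ (0 < t /\ conv_Ep (at_left t) w None)) ->
         forall u, t <= u -> w u = None)].

Record traj := Traj { path :> R -> option E ; path_traj : is_traj path }.

Lemma cst_None_traj : is_traj (fun _ : R => None).
Proof.
split => //.
- by move=> t _ K _; apply: filterE => u y.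
- by move=> t _; exists None => K _; apply: filterE => u y.
Qed.

End Trajectories.
Arguments traj : clear implicits.

HB.instance Definition _ (R : realType) (E : ptopologicalType) :=
  gen_eqMixin (traj R E).
HB.instance Definition _ (R : realType) (E : ptopologicalType) :=
  gen_choiceMixin (traj R E).
HB.instance Definition _ (R : realType) (E : ptopologicalType) :=
  isPointed.Build (traj R E) (Traj (@cst_None_traj R E)).

Definition traj_gens (R : realType) (E : ptopologicalType) : set (set (traj R E)) :=
  [set B | exists s A, 0 <= s /\ measurable_Ep A /\ B = [set w : traj R E | A (w s)]].

Definition Omega (R : realType) (E : ptopologicalType) :=
  g_sigma_algebraType (@traj_gens R E).

Section FellerDynkin.
Context {R : realType} {E : ptopologicalType}.
Local Notation Eb := (borelType E).

Definition C0 (f : E -> R) : Prop :=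
  continuous f /\
  forall eps : R, 0 < eps ->
    exists K : set E, compact K /\ forall x, ~ K x -> `|f x| < eps.

(* Feller-Dynkin semigroup on C_0(E) (Phat t only matters for t >= 0). *)
Definition feller_dynkin_semigroup (Phat : R -> (E -> R) -> E -> R) : Prop :=
  [/\ (forall t f, 0 <= t -> C0 f -> C0 (Phat t f)),
      (forall t f g (a b : R), 0 <= t -> C0 f -> C0 g ->
         Phat t (fun x => a * f x + b * g x) =
         (fun x => a * Phat t f x + b * Phat t g x)),
      (forall f, C0 f -> Phat 0 f = f),
      (forall s t f, 0 <= s -> 0 <= t -> C0 f ->
         Phat (s + t) f = Phat s (Phat t f)) &
      (forall f t, C0 f -> 0 <= t -> forall eps : R, 0 < eps ->
         exists2 delta : R, 0 < delta & forall s, 0 <= s -> `|s - t| < delta ->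
           forall x, `|Phat s f x - Phat t f x| < eps)]
  /\
  (forall t f, 0 <= t -> C0 f -> (forall x, 0 <= f x <= 1) ->
         forall x, 0 <= Phat t f x <= 1).

Definition kernels_of (Phat : R -> (E -> R) -> E -> R)
    (P : R -> R.-spker Eb ~> Eb) : Prop :=
  forall t f x, 0 <= t -> C0 f ->
    ((Phat t f x)%:E = \int[P t x]_y (f y)%:E)%E.

Definition int_ext (P : R -> R.-spker Eb ~> Eb) (h : R) (p : option E)
    (g : option E -> \bar R) : \bar R :=
  match p with
  | Some x => (\int[P h x]_y g (Some y) + g None * (1 - P h x setT))%E
  | None => g None
  end.

(* A list L = [(h1,A1);...;(hn,An)]
   of time increments h_i >= 0 and Borel sets A_i of E_partial encodes
   the times t_i = h1 + ... + hi (so 0 <= t1 <= ... <= tn) and the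
   event {X_{t1} in A1, ..., X_{tn} in An}. *)
Fixpoint valid_fdd (L : seq (R * set (option E))) : Prop :=
  match L with
  | [::] => True
  | (h, A) :: L' => 0 <= h /\ measurable_Ep A /\ valid_fdd L'
  end.

Fixpoint fdd_event (s : R) (L : seq (R * set (option E))) (w : traj R E) : Prop :=
  match L with
  | [::] => True
  | (h, A) :: L' => A (w (s + h)) /\ fdd_event (s + h) L' w
  end.

Fixpoint fdd_value (P : R -> R.-spker Eb ~> Eb) (p : option E)
    (L : seq (R * set (option E))) : \bar R :=
  match L with
  | [::] => 1%E
  | (h, A) :: L' =>
      int_ext P h p (fun q => ((\1_A q)%:E * fdd_value P q L')%E)
  end.

Definition process_laws (P : R -> R.-spker Eb ~> Eb)
    (Px : E -> probability (Omega R E) R) : Prop :=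
  forall x (A0 : set (option E)) (L : seq (R * set (option E))),
    measurable_Ep A0 -> valid_fdd L ->
    Px x [set w : Omega R E | A0 (path w 0) /\ fdd_event 0 L w] =
    ((\1_A0 (Some x))%:E * fdd_value P (Some x) L)%E.

Definition feller_dynkin_process (Phat : R -> (E -> R) -> E -> R)
    (P : R -> R.-spker Eb ~> Eb) (Px : E -> probability (Omega R E) R) : Prop :=
  [/\ lcch_space E, feller_dynkin_semigroup Phat, kernels_of Phat P
    & process_laws P Px].

Definition rel_Ep (Rl : E -> E -> Prop) (p q : option E) : Prop :=
  match p, q with
  | Some a, Some b => Rl a b
  | None, None => True
  | _, _ => False
  end.

Definition R_closed (Rl : E -> E -> Prop) (B : set (Omega R E)) : Prop :=
  forall w w' : traj R E, B w ->
    (forall t, 0 <= t -> rel_Ep Rl (w t) (w' t)) -> B w'.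

Definition bisimulation {AP : finType} (obs : E -> {set AP})
    (Px : E -> probability (Omega R E) R) (Rl : E -> E -> Prop) : Prop :=
  equivalence E Rl /\
  forall x y, Rl x y ->
    obs x = obs y /\
    forall B : set (Omega R E), measurable B -> R_closed Rl B -> Px x B = Px y B.

End FellerDynkin.

From HB Require Import structures.
From mathcomp Require Import all_boot all_order all_algebra.
From mathcomp Require Import all_classical all_reals all_analysis.
From Stdlib Require Import Relations.

Set Implicit Arguments.
Unset Strict Implicit.
Unset Printing Implicit Defensive.

(* Being R-closed is antitone in R, so two states that agree (in observation
   and in law on R_i-closed events) also agree on the events closed under the
   larger relation R.  Agreement is transitive, hence it propagates along the
   chains of R_1- and R_2-steps that make up R. *)

Lemma clos_trans_equivalence (T : Type) (S : relation T) :
  reflexive T S -> symmetric T S -> equivalence T (clos_trans T S).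
Proof.
move=> reflS symS; split.
- by move=> x; apply: t_step.
- by move=> x y z; apply: t_trans.
- move=> x y; elim=> {x y} [x y /symS|x y z _ IHxy _ IHyz]; first exact: t_step.
  exact: t_trans IHyz IHxy.
Qed.

Lemma clos_trans_minimal (T : Type) (S U : relation T) :
  inclusion T S U -> transitive T U -> inclusion T (clos_trans T S) U.
Proof.
move=> sSU trU x y; elim=> {x y} [x y /sSU //|x y z _ Uxy _ Uyz].
exact: trU Uxy Uyz.
Qed.

Section Agreement.
Context {R : realType} {E : ptopologicalType} {AP : finType}.
Variables (obs : E -> {set AP}) (Px : E -> probability (Omega R E) R).

Lemma R_closed_subrel (Rl Rl' : relation E) (B : set (Omega R E)) :
  inclusion E Rl Rl' -> R_closed Rl' B -> R_closed Rl B.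
Proof.
move=> sub clB w w' Bw ww'; apply: clB Bw _ => t t0.
by move: (ww' t t0); case: (w t) => [a|]; case: (w' t) => [b|] //=; apply: sub.
Qed.

Definition agree_on_closed (Rl : relation E) (x y : E) : Prop :=
  obs x = obs y /\
  forall B : set (Omega R E), measurable B -> R_closed Rl B -> Px x B = Px y B.

Lemma agree_on_closed_subrel (Rl Rl' : relation E) :
  inclusion E Rl Rl' ->
  inclusion E (agree_on_closed Rl) (agree_on_closed Rl').
Proof.
move=> sub x y [obsxy Pxy]; split=> // B mB clB.
by apply: Pxy mB _; apply: R_closed_subrel clB.
Qed.

Lemma agree_on_closed_trans (Rl : relation E) :
  transitive E (agree_on_closed Rl).
Proof.
move=> x y z [obsxy Pxy] [obsyz Pyz]; split; first by rewrite obsxy.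
by move=> B mB clB; rewrite (Pxy B mB clB) (Pyz B mB clB).
Qed.

Lemma bisimulationE (Rl : relation E) :
  bisimulation obs Px Rl <->
  equivalence E Rl /\ inclusion E Rl (agree_on_closed Rl).
Proof. exact: iff_refl. Qed.

End Agreement.

Theorem mainTheorem1 (R : realType) (E : ptopologicalType) (AP : finType)
    (obs : E -> {set AP}) (Phat : R -> (E -> R) -> E -> R)
    (P : R -> R.-spker borelType E ~> borelType E)
    (Px : E -> probability (Omega R E) R)
    (R1 R2 : E -> E -> Prop) :
  feller_dynkin_process Phat P Px ->
  bisimulation obs Px R1 -> bisimulation obs Px R2 ->
  bisimulation obs Px (clos_trans E (fun x y => R1 x y \/ R2 x y)).
Proof.
move=> _ /bisimulationE[[refl1 _ sym1] agree1] /bisimulationE[[_ _ sym2] agree2].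
have R1_sub : inclusion E R1 (clos_trans E (fun x y => R1 x y \/ R2 x y)).
  by move=> x y R1xy; apply: t_step; left.
have R2_sub : inclusion E R2 (clos_trans E (fun x y => R1 x y \/ R2 x y)).
  by move=> x y R2xy; apply: t_step; right.
apply/bisimulationE; split.
- apply: clos_trans_equivalence.
  + by move=> x; left; apply: refl1.
  + by move=> x y [/sym1|/sym2]; [left|right].
- apply: clos_trans_minimal; last exact: agree_on_closed_trans.
  move=> x y [R1xy|R2xy].
  + exact: agree_on_closed_subrel R1_sub _ _ (agree1 _ _ R1xy).
  + exact: agree_on_closed_subrel R2_sub _ _ (agree2 _ _ R2xy).
Qed.
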